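(* Let $\Gamma$ be a distance-regular graph with diameter $3$, $n$ vertices and eigenvalues $k>\theta_1>\theta_2>\theta_3$, and let $m_1$ be the multiplicity of $\theta_1$. If $n\geq \frac{(m_1+2)(m_1+1)}{2}$, then $q^2_{11}=0$ or $q^3_{11}=0$, and hence $\Gamma$ is $Q$-polynomial with respect to $\theta_1$.
   Context: A connected graph $\Gamma$ of diameter $D$ is distance-regular if there are integers $b_i,c_i$ ($0\le i\le D$) such that for any two vertices $x,y$ at distance $i$, exactly $c_i$ neighbours of $y$ are at distance $i-1$ from $x$ and exactly $b_i$ neighbours of $y$ are at distance $i+1$ from $x$. Its eigenvalues (of the adjacency matrix) are $k=\theta_0>\theta_1>\dots>\theta_D$. Let $E_i$ be the orthogonal projection onto the eigenspace of $\theta_i$ (so $E_0=\frac1nJ$). The Krein parameters $q^h_{ij}$ are defined by $E_i\circ E_j=\frac1n\sum_{h=0}^D q^h_{ij}E_h$, where $\circ$ is the entrywise product. $\Gamma$ is $Q$-polynomial with respect to $\theta_1$ if there is an ordering $E_0,E_1,F_2,\dots,F_D$ of the primitive idempotents, beginning with $E_0$ and the projection $E_1$ for $\theta_1$, such that in this ordering the Krein parameter $q^{h}_{1j}$ vanishes whenever the positions $j,h$ satisfy $|j-h|>1$. *)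

From HB Require Import structures.
From mathcomp Require Import all_boot all_order all_algebra.
From mathcomp Require Import reals.
Set Implicit Arguments. Unset Strict Implicit. Unset Printing Implicit Defensive.
Import Order.TTheory GRing.Theory Num.Theory.
Local Open Scope ring_scope.

Section Graphs.
Variable n : nat.
Implicit Types adj : rel 'I_n.

Fixpoint walk adj (k : nat) (x y : 'I_n) : bool :=
  match k with
  | 0 => x == y
  | k'.+1 => [exists z, adj x z && walk adj k' z y]
  end.

Definition connected_graph adj := forall x y, exists k, walk adj k x y.

(* graph distance: least k with a walk of length k (meaningful when connected,
   since then a walk of length < n exists) *)
Definition dist adj (x y : 'I_n) : nat :=
  find (fun k => walk adj k x y) (iota 0 n).

Definition diameter_is adj (D : nat) :=
  (forall x y, (dist adj x y <= D)%N) /\ exists x y, dist adj x y = D.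

Definition distance_regular adj :=
  connected_graph adj /\
  exists b c : nat -> nat, forall x y : 'I_n,
    (#|[set z | adj y z & dist adj x z == (dist adj x y).+1]| = b (dist adj x y))%N /\
    ((0 < dist adj x y)%N ->
     #|[set z | adj y z & dist adj x z == (dist adj x y).-1]| = c (dist adj x y))%N.

Definition adjmx (R : nzRingType) adj : 'M[R]_n := \matrix_(i, j) (adj i j)%:R.

Definition is_orth_proj (R : fieldType) (A : 'M[R]_n) (th : R) (E : 'M[R]_n) :=
  E^T = E /\ E *m E = E /\ (E == eigenspace A th)%MS.

Definition hadamard (R : nzRingType) (E F : 'M[R]_n) : 'M[R]_n :=
  \matrix_(i, j) (E i j * F i j).
End Graphs.

(* Q-polynomiality w.r.t. E_1, given Krein parameters q i j h = q^h_{ij}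
   (indices 0..D): an ordering E_0, E_1, F_2, ..., F_D (sigma a permutation of
   {0..D} fixing 0 and 1) with q^{sigma h}_{1 (sigma j)} = 0 whenever |j-h|>1. *)
Definition Q_polynomial_wrt1 (R : nzRingType) (D : nat) (q : nat -> nat -> nat -> R) :=
  exists sigma : nat -> nat,
    [/\ sigma 0 = 0%N, sigma 1 = 1%N,
        perm_eq (map sigma (iota 0 D.+1)) (iota 0 D.+1) &
        forall j h, (j <= D)%N -> (h <= D)%N -> (j.+1 < h \/ h.+1 < j)%N ->
          q 1%N (sigma j) (sigma h) = 0].

From HB Require Import structures.
From mathcomp Require Import all_boot all_order all_algebra.
From mathcomp Require Import reals.
From mathcomp.real_closed Require Import complex.
From mathcomp Require Import ring zify.
Set Implicit Arguments. Unset Strict Implicit. Unset Printing Implicit Defensive.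
Import Order.TTheory GRing.Theory Num.Theory.
Local Open Scope ring_scope.

(* Put E := E_1 and M := E o E (entrywise product). Writing E = U V with U of
   width m_1 = rank E, every row of M is a combination of the m_1(m_1+1)/2 rows
   V_a o V_b (a <= b), so rank M <= m_1(m_1+1)/2. On the other hand
   M E_h = (q^h_11 / n) E_h, and q^0_11 = <E, E> <> 0 because E_0 fixes, and
   the other E_h kill, the all-ones vector. So if q^2_11 and q^3_11 were both
   nonzero, the image of M would contain E_0 + E_2 + E_3 = I - E_1, and
   n - m_1 <= rank M would contradict n >= (m_1+2)(m_1+1)/2. Q-polynomiality
   then follows from q^h_10 = q^0_1h = 0 (h <> 1) and the symmetry
   q^b_1a m_b = q^a_1b m_a of the Krein parameters. *)

Section Frobenius.
Variables (R : comNzRingType) (n : nat).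
Implicit Types X Y Z : 'M[R]_n.

Definition frobenius X Y : R := \sum_i \sum_j X i j * Y i j.

Lemma frobenius_trace X Y : frobenius X Y = \tr (X *m Y^T).
Proof.
by apply: eq_bigr => i _; rewrite mxE; apply: eq_bigr => j _; rewrite mxE.
Qed.

Lemma frobeniusZl a X Y : frobenius (a *: X) Y = a * frobenius X Y.
Proof. by rewrite !frobenius_trace -scalemxAl mxtraceZ. Qed.

Lemma frobenius_suml I (r : seq I) (F : I -> 'M[R]_n) Y :
  frobenius (\sum_(i <- r) F i) Y = \sum_(i <- r) frobenius (F i) Y.
Proof.
rewrite frobenius_trace mulmx_suml linear_sum.
by apply: eq_bigr => i _; rewrite frobenius_trace.
Qed.

Lemma frobenius_hadamardC X Y Z :
  frobenius (hadamard X Y) Z = frobenius (hadamard X Z) Y.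
Proof. by apply: eq_bigr => i _; apply: eq_bigr => j _; rewrite !mxE mulrAC. Qed.

Lemma frobenius_hadamard_const1 X Y :
  frobenius (hadamard X Y) (const_mx 1) = frobenius X Y.
Proof. by apply: eq_bigr => i _; apply: eq_bigr => j _; rewrite !mxE mulr1. Qed.

Lemma frobenius_const1 X :
  frobenius X (const_mx 1) = \sum_i (X *m (const_mx 1 : 'cV_n)) i 0.
Proof.
by apply: eq_bigr => i _; rewrite mxE; apply: eq_bigr => j _; rewrite !mxE.
Qed.

End Frobenius.

Lemma frobenius_self_eq0 (R : realDomainType) n (X : 'M[R]_n) :
  (frobenius X X == 0) = (X == 0).
Proof.
apply/idP/eqP => [/eqP X0|->]; last first.
  by rewrite /frobenius big1 // => i _; rewrite big1 // => j _; rewrite mxE mul0r.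
have sq_ge0 (x : R) : 0 <= x * x by rewrite -expr2 sqr_ge0.
have rows0 := psumr_eq0P (fun i _ => sumr_ge0 _ (fun j _ => sq_ge0 (X i j))) X0.
apply/matrixP => i j; rewrite mxE.
have /eqP := psumr_eq0P (fun j _ => sq_ge0 (X i j)) (rows0 i isT) (i := j) isT.
by rewrite mulf_eq0 orbb => /eqP.
Qed.

Lemma mxrank_sumsmx_leq (F : fieldType) n I (r : seq I) (P : pred I)
    (B_ : I -> 'M[F]_n) :
  (\rank (\sum_(i <- r | P i) B_ i)%MS <= \sum_(i <- r | P i) \rank (B_ i))%N.
Proof.
apply: (big_ind2 (fun B k => \rank B <= k)%N); first by rewrite mxrank0.
  move=> B1 k1 B2 k2 le1 le2.
  exact: leq_trans (mxrank_adds_leqif B1 B2).1 (leq_add le1 le2).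
by move=> i _.
Qed.

Lemma sum1_ord_leq r (b : 'I_r) : (\sum_(a < r | (a <= b)%N) 1 = b.+1)%N.
Proof.
transitivity (\sum_(0 <= a < r | true && (a < b.+1)%N) 1)%N; first by rewrite big_mkord.
by rewrite -big_nat_widen ?ltn_ord // sum_nat_const_nat subn0 muln1.
Qed.

Lemma double_sum_succ r : (2 * \sum_(b < r) b.+1 = r * r.+1)%N.
Proof. by elim: r => [|r IH]; rewrite ?big_ord0 // big_ord_recr /= mulnDr IH; lia. Qed.

Lemma mxrank_hadamard_self (F : fieldType) n (X : 'M[F]_n) :
  (2 * \rank (hadamard X X) <= \rank X * (\rank X).+1)%N.
Proof.
set r := \rank X; pose U := col_base X; pose V := row_base X.
pose v (a b : 'I_r) : 'rV[F]_n := \row_j (V a j * V b j).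
pose W := (\sum_(b < r) \sum_(a < r | (a <= b)%N) <<v a b>>)%MS.
have vW a b : (v a b <= W)%MS.
  wlog le_ab : a b / (a <= b)%N => [wlog_le|].
    have [/wlog_le//|/ltnW/wlog_le] := leqP a b.
    by congr (_ <= W)%MS; apply/rowP => j; rewrite !mxE mulrC.
  by rewrite (sumsmx_sup b) // (sumsmx_sup a) // genmxE.
have XX : hadamard X X = \sum_a \sum_b \col_i (U i a * U i b) *m v a b.
  have XE i j : X i j = \sum_a U i a * V a j by rewrite -{1}(mulmx_base X) mxE.
  apply/matrixP => i j; rewrite mxE !XE summxE big_distrl /=.
  apply: eq_bigr => a _; rewrite summxE big_distrr; apply: eq_bigr => b _.
  by rewrite !mxE big_ord1 !mxE mulrACA.
have rankW : (\rank W <= \sum_(b < r) b.+1)%N.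
  apply: leq_trans (mxrank_sumsmx_leq _ _ _) _; apply: leq_sum => b _.
  apply: leq_trans (mxrank_sumsmx_leq _ _ _) _; rewrite -sum1_ord_leq.
  by apply: leq_sum => a _; rewrite genmxE rank_leq_row.
rewrite -double_sum_succ leq_mul2l /=; apply: leq_trans rankW.
apply: mxrankS; rewrite XX; apply: summx_sub => a _; apply: summx_sub => b _.
exact: submx_trans (submxMl _ _) (vW a b).
Qed.

Section SymmetricMatrix.
Variables (R : rcfType) (I : finType) (th : I -> R).

(* Over R[i], A is unitarily similar to a real diagonal matrix, and each
   diagonal entry is an eigenvalue of A itself, hence some th i. *)
Lemma symmetric_mx_annihilated n (A : 'M[R]_n.+1) :
  A^T = A -> (forall a, eigenvalue A a -> exists i, a = th i) ->
  horner_mx A (\prod_i ('X - (th i)%:P)) = 0.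
Proof.
move=> A_sym A_ev; pose toC : {rmorphism R -> R[i]} := real_complex R.
pose Ac := map_mx toC A.
have Ac_herm : Ac \is hermsymmx.
  apply: realsym_hermsym.
    by apply/is_hermitianmxP; rewrite expr0 scale1r map_mx_id // /Ac map_trmx A_sym.
  by apply/mxOverP => i j; rewrite mxE; apply/complex_realP; exists (A i j).
have /orthomx_spectralP AcE := hermitian_normalmx Ac_herm.
have d_real := hermitian_spectral_diag_real Ac_herm.
set P := spectralmx Ac in AcE; set d := spectral_diag Ac in AcE d_real.
have P_unit : P \in unitmx := spectral_unit Ac.
apply: (@map_mx_inj _ _ toC).
rewrite map_mx0 map_horner_mx -/Ac AcE horner_mx_uconjC // horner_mx_diag.
suff -> : map_mx (horner (map_poly toC (\prod_i ('X - (th i)%:P)))) d = 0.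
  by rewrite (_ : diag_mx 0 = 0) ?mulmx0 ?mul0mx //; apply/matrixP => a b; rewrite !mxE mul0rn.
apply/matrixP => i j; rewrite !mxE.
have [k dk] : exists k, d 0 j = toC k by apply/complex_realP; move/mxOverP: d_real; apply.
have : eigenvalue A k.
  rewrite eigenvalue_root_char -(fmorph_root toC) map_char_poly -/Ac -dk.
  rewrite -eigenvalue_root_char; apply/eigenvalueP; exists (row j P).
    by rewrite {1}AcE !mulmxA rowE mulmxK // -!rowE row_diag_mx -scalemxAl -rowE.
  rewrite rowE mulmx_free_eq0 ?row_free_unit //.
  by apply/eqP => /matrixP /(_ 0 j); rewrite !mxE !eqxx /= => /eqP; rewrite oner_eq0.
move=> /A_ev [l kE]; rewrite (ord1 i) dk kE rmorph_prod horner_prod (bigD1 l) //=.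
by rewrite map_polyXsubC hornerXsubC subrr mul0r.
Qed.

Lemma symmetric_mx_eigenspaces_span n (A : 'M[R]_n) :
  A^T = A -> injective th -> (forall a, eigenvalue A a -> exists i, a = th i) ->
  (1%:M <= \sum_i eigenspace A (th i))%MS.
Proof.
case: n A => [|n] A A_sym th_inj A_ev; first by rewrite thinmx0 sub0mx.
have /mxminpoly_min/kermxpoly_min <- := symmetric_mx_annihilated A_sym A_ev.
rewrite kermxpoly_prod => [|i j _ _ ji]; last first.
  by apply: coprimep_XsubC2; rewrite subr_eq0 (inj_eq th_inj).
by apply/sumsmx_subP => i _; rewrite (sumsmx_sup i) // eigenspace_poly.
Qed.

End SymmetricMatrix.

Lemma eigenvalue_le_colsum (R : realFieldType) n (A : 'M[R]_n) (k a : R) :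
  (forall i j, 0 <= A i j) -> (forall j, \sum_i A i j = k) ->
  eigenvalue A a -> `|a| <= k.
Proof.
move=> A_ge0 colsum /eigenvalueP [w wA w_neq0].
have [x0 wx0] : exists x, w 0 x != 0.
  case: (pickP (fun x => w 0 x != 0)) => [x0 wx0|w0]; first by exists x0.
  by case/eqP: w_neq0; apply/rowP => x; have /negbFE/eqP := w0 x; rewrite mxE.
have [x _ w_max] := arg_maxP (fun x => `|w 0 x|) (isT : predT x0).
have wx_gt0 : 0 < `|w 0 x| by rewrite (lt_le_trans _ (w_max x0 isT)) ?normr_gt0.
rewrite -(ler_pM2r wx_gt0) -normrM.
have -> : a * w 0 x = (w *m A) 0 x by rewrite wA mxE.
rewrite mxE (le_trans (ler_norm_sum _ _ _)) // -(colsum x) mulr_suml.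
apply: ler_sum => z _; rewrite normrM (ger0_norm (A_ge0 _ _)) mulrC ler_wpM2l //.
exact: w_max.
Qed.

Lemma dist_refl n (adj : rel 'I_n) x : dist adj x x = 0%N.
Proof. by case: n adj x => [? []//|n adj x]; rewrite /dist /= eqxx. Qed.

Lemma dist_adj n (adj : rel 'I_n) x y :
  irreflexive adj -> adj x y -> dist adj x y = 1%N.
Proof.
case: n adj x y => [? []//|[|n] adj x y adj_irr adj_xy].
  by move: adj_xy; rewrite (ord1 x) (ord1 y) adj_irr.
have /negPf x_neq_y : x != y by apply: contraTneq adj_xy => ->; rewrite adj_irr.
rewrite /dist /= x_neq_y; case: existsP => // -[].
by exists y; rewrite adj_xy eqxx.
Qed.

Lemma distance_regular_regular n (adj : rel 'I_n) :
  irreflexive adj -> distance_regular adj ->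
  exists k, forall y, #|[set z | adj y z]| = k.
Proof.
move=> adj_irr [_ [b [c bc]]]; exists (b 0%N) => y.
have [+ _] := bc y y; rewrite dist_refl => <-; apply: eq_card => z; rewrite !inE.
by case adj_yz: (adj y z); rewrite //= dist_adj.
Qed.

Section AdjacencyMatrix.
Variables (R : nzRingType) (n : nat) (adj : rel 'I_n).

Lemma adjmx_sym : symmetric adj -> (adjmx R adj)^T = adjmx R adj.
Proof. by move=> adj_sym; apply/matrixP => i j; rewrite !mxE adj_sym. Qed.

Lemma adjmx_rowsum y : \sum_z adjmx R adj y z = #|[set z | adj y z]|%:R.
Proof.
rewrite -sum1_card natr_sum [RHS]big_mkcond /=.
by apply: eq_bigr => z _; rewrite !mxE inE; case: (adj y z).
Qed.

End AdjacencyMatrix.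

Section PrimitiveIdempotents.
Context {R : rcfType} {n d : nat} {A : 'M[R]_n} {th : nat -> R} {E : nat -> 'M[R]_n}.
Hypotheses (A_sym : A^T = A)
  (th_inj : forall i j, (i < d)%N -> (j < d)%N -> th i = th j -> i = j)
  (eigenvalueE : forall a, eigenvalue A a <-> exists2 i, (i < d)%N & a = th i)
  (E_proj : forall i, (i < d)%N -> is_orth_proj A (th i) (E i)).

Lemma E_sym h : (h < d)%N -> (E h)^T = E h.
Proof. by move=> /E_proj[]. Qed.

Lemma E_idem h : (h < d)%N -> E h *m E h = E h.
Proof. by move=> /E_proj[_ []]. Qed.

Lemma E_eigenspace h : (h < d)%N -> (E h == eigenspace A (th h))%MS.
Proof. by move=> /E_proj[_ []]. Qed.

Lemma E_mulA h : (h < d)%N -> E h *m A = th h *: E h.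
Proof. by move=> /E_eigenspace/andP[/eigenspaceP]. Qed.

Lemma A_mulE h : (h < d)%N -> A *m E h = th h *: E h.
Proof.
by move=> h_lt; apply: trmx_inj; rewrite trmx_mul A_sym E_sym // E_mulA // linearZ /= E_sym.
Qed.

Lemma E_orth h g : (h < d)%N -> (g < d)%N -> h != g -> E h *m E g = 0.
Proof.
move=> h_lt g_lt h_neq_g.
have : (th h - th g) *: (E h *m E g) = 0.
  by rewrite scalerBl scalemxAl -E_mulA // scalemxAr -A_mulE // mulmxA subrr.
move/eqP; rewrite scaler_eq0 subr_eq0 => /orP[/eqP/th_inj eq_hg|/eqP //].
by case/eqP: h_neq_g; apply: eq_hg.
Qed.

Lemma E_neq0 h : (h < d)%N -> E h != 0.
Proof.
move=> h_lt; have /eigenvalueE : exists2 i, (i < d)%N & th h = th i by exists h.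
by apply: contraNneq => Eh0; rewrite /eigenvalue -submx0 -Eh0; case/andP: (E_eigenspace h_lt).
Qed.

Lemma E_mul_sumE h : (h < d)%N -> E h *m \sum_(g < d) E g = E h.
Proof.
move=> h_lt; rewrite mulmx_sumr (bigD1 (Ordinal h_lt)) //= E_idem // big1 ?addr0 //.
by move=> g; rewrite -(inj_eq val_inj) /= eq_sym => /E_orth->.
Qed.

Lemma sum_E : \sum_(h < d) E h = 1%:M.
Proof.
have span : (1%:M <= \sum_(h < d) E h)%MS.
  apply: submx_trans (_ : _ <= \sum_(h < d) eigenspace A (th h))%MS _.
    apply: (symmetric_mx_eigenspaces_span A_sym) => [i j /th_inj/val_inj|a].
      by apply; rewrite ltn_ord.
    by case/eigenvalueE => i i_lt ->; exists (Ordinal i_lt).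
  by apply: sumsmxS => h _; case/andP: (E_eigenspace (ltn_ord h)).
have [W W_E] := sub_sumsmxP span.
rewrite [RHS]W_E -[LHS]mul1mx [in LHS]W_E mulmx_suml.
by apply: eq_bigr => h _; rewrite -mulmxA E_mul_sumE.
Qed.

Context {q : nat -> nat -> nat -> R}.
Hypotheses
  (E_const1 : forall h, (h < d)%N ->
     E h *m (const_mx 1 : 'cV_n) = if h == 0%N then const_mx 1 else 0)
  (krein : forall i j, (i < d)%N -> (j < d)%N ->
     hadamard (E i) (E j) = n%:R^-1 *: \sum_(h < d) q i j h *: E h)
  (n_gt0 : (0 < n)%N).


Let n_neq0 : (n%:R : R) != 0. Proof. by rewrite pnatr_eq0 -lt0n. Qed.

Lemma frobenius_E_orth g h : (g < d)%N -> (h < d)%N -> g != h ->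
  frobenius (E g) (E h) = 0.
Proof. by move=> g_lt h_lt gh; rewrite frobenius_trace E_sym // E_orth // mxtrace0. Qed.

Lemma frobenius_E_self_neq0 h : (h < d)%N -> frobenius (E h) (E h) != 0.
Proof. by move=> h_lt; rewrite frobenius_self_eq0 E_neq0. Qed.

Lemma frobenius_E_const1 h : (h < d)%N ->
  frobenius (E h) (const_mx 1) = if h == 0%N then n%:R else 0.
Proof.
move=> h_lt; rewrite frobenius_const1 E_const1 //.
case: eqP => _; last by rewrite big1 // => x _; rewrite mxE.
under eq_bigr do rewrite mxE.
by rewrite sumr_const card_ord.
Qed.

Lemma frobenius_hadamard_E i j Y : (i < d)%N -> (j < d)%N ->
  frobenius (hadamard (E i) (E j)) Y = n%:R^-1 * \sum_(g < d) q i j g * frobenius (E g) Y.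
Proof.
move=> i_lt j_lt; rewrite krein // frobeniusZl frobenius_suml.
by congr (_ * _); apply: eq_bigr => g _; rewrite frobeniusZl.
Qed.

Lemma frobenius_hadamard_EE i j h : (i < d)%N -> (j < d)%N -> (h < d)%N ->
  frobenius (hadamard (E i) (E j)) (E h) = n%:R^-1 * (q i j h * frobenius (E h) (E h)).
Proof.
move=> i_lt j_lt h_lt; rewrite frobenius_hadamard_E // (bigD1 (Ordinal h_lt)) //=.
rewrite big1 ?addr0 // => g; rewrite -(inj_eq val_inj) /= => g_neq_h.
by rewrite frobenius_E_orth ?mulr0.
Qed.

Lemma krein0E i j : (i < d)%N -> (j < d)%N -> q i j 0%N = frobenius (E i) (E j).
Proof.
move=> i_lt j_lt; have d_gt0 : (0 < d)%N by apply: leq_ltn_trans i_lt.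
rewrite -frobenius_hadamard_const1 frobenius_hadamard_E //.
rewrite (bigD1 (Ordinal d_gt0)) //= big1 ?addr0 => [|g g_neq0].
  by rewrite frobenius_E_const1 // eqxx mulrC mulfK.
move: g_neq0; rewrite -(inj_eq val_inj) /= => /negPf g_neq0.
by rewrite frobenius_E_const1 // g_neq0 mulr0.
Qed.

Lemma krein0_neq0 i : (i < d)%N -> q i i 0%N != 0.
Proof. by move=> i_lt; rewrite krein0E // frobenius_E_self_neq0. Qed.

(* Both sides equal n times the sum of the entries of E_i o E_a o E_b. *)
Lemma krein_swap i a b : (i < d)%N -> (a < d)%N -> (b < d)%N ->
  q i a b * frobenius (E b) (E b) = q i b a * frobenius (E a) (E a).
Proof.
move=> i_lt a_lt b_lt; apply: (mulfI (invr_neq0 n_neq0)).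
by rewrite -!frobenius_hadamard_EE // frobenius_hadamardC.
Qed.

Lemma krein_swap_eq0 i a b : (i < d)%N -> (a < d)%N -> (b < d)%N ->
  q i a b = 0 -> q i b a = 0.
Proof.
move=> i_lt a_lt b_lt qab0; have := krein_swap i_lt a_lt b_lt.
rewrite qab0 mul0r => /esym/eqP; rewrite mulf_eq0 (negPf (frobenius_E_self_neq0 a_lt)).
by rewrite orbF => /eqP.
Qed.

Lemma krein0_eq0 i h : (i < d)%N -> (h < d)%N -> h != i ->
  q i h 0%N = 0 /\ q i 0%N h = 0.
Proof.
move=> i_lt h_lt h_neq_i; have d_gt0 : (0 < d)%N by apply: leq_ltn_trans i_lt.
have qih0 : q i h 0%N = 0 by rewrite krein0E // frobenius_E_orth // eq_sym.
by split=> //; apply: krein_swap_eq0.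
Qed.

Lemma hadamard_E_mulE i j g : (i < d)%N -> (j < d)%N -> (g < d)%N ->
  hadamard (E i) (E j) *m E g = (n%:R^-1 * q i j g) *: E g.
Proof.
move=> i_lt j_lt g_lt; rewrite krein // -scalemxAl mulmx_suml (bigD1 (Ordinal g_lt)) //=.
rewrite big1 ?addr0 => [|h]; first by rewrite -scalemxAl E_idem // scalerA.
by rewrite -(inj_eq val_inj) /= => hg; rewrite -scalemxAl E_orth // scaler0.
Qed.

Lemma rank_hadamard_E_lower i : (i < d)%N ->
  (forall h, (h < d)%N -> h != i -> q i i h != 0) ->
  (n <= \rank (E i) + \rank (hadamard (E i) (E i)))%N.
Proof.
move=> i_lt q_neq0; set M := hadamard (E i) (E i).
pose F := \sum_(h < d | h != Ordinal i_lt) (n%:R * (q i i h)^-1) *: E h.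
have MF : E i + M *m F = 1%:M.
  rewrite -sum_E (bigD1 (Ordinal i_lt)) //=.
  congr (_ + _); rewrite mulmx_sumr; apply: eq_bigr => h h_neq_i.
  have h_neq_i' : val h != i by rewrite -(inj_eq val_inj) in h_neq_i.
  rewrite -scalemxAr hadamard_E_mulE // scalerA.
  have q_hi := q_neq0 h (ltn_ord h) h_neq_i'.
  by rewrite [_ * _](_ : _ = 1) ?scale1r //; field; rewrite q_hi n_neq0.
rewrite -[X in (X <= _)%N](mxrank1 R n) -MF.
apply: leq_trans (mxrankS (addmx_sub_adds (submx_refl _) (submx_refl _))) _.
by apply: leq_trans (mxrank_adds_leqif _ _).1 _; rewrite leq_add2l mxrankM_maxl.
Qed.

Lemma krein_ii_vanishes i : (i < d)%N ->
  ((\rank (E i) + 2) * (\rank (E i) + 1) <= 2 * n)%N ->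
  exists h, [/\ (h < d)%N, h != 0%N, h != i & q i i h = 0].
Proof.
move=> i_lt rank_bound.
have [/existsP [h /andP [h_neq_i /eqP qh]]|/existsPn q_neq0] :=
  boolP [exists h : 'I_d, (val h != i) && (q i i h == 0)].
  exists h; split=> //; apply: contraTneq (krein0_neq0 i_lt) => h0.
  by rewrite -h0 qh eqxx.
exfalso; have q_ii_neq0 h : (h < d)%N -> h != i -> q i i h != 0.
  by move=> h_lt h_neq_i; have := q_neq0 (Ordinal h_lt); rewrite /= h_neq_i.
have := rank_hadamard_E_lower i_lt q_ii_neq0.
have := mxrank_hadamard_self (E i).
by move: rank_bound; move: (\rank (E i)) (\rank (hadamard _ _)) => m r; nia.
Qed.

End PrimitiveIdempotents.

Lemma decreasing_injective (R : numDomainType) d (th : nat -> R) :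
  (forall i j, (i < j)%N -> (j < d)%N -> th j < th i) ->
  forall i j, (i < d)%N -> (j < d)%N -> th i = th j -> i = j.
Proof.
move=> th_dec i j i_lt j_lt eq_th; case: (ltngtP i j) => [lt_ij|lt_ji|//].
  by have := th_dec i j lt_ij j_lt; rewrite eq_th ltxx.
by have := th_dec j i lt_ji i_lt; rewrite eq_th ltxx.
Qed.

Section RegularGraph.
Context {R : rcfType} {n d : nat} {adj : rel 'I_n} {th : nat -> R} {E : nat -> 'M[R]_n}.
Local Notation A := (adjmx R adj).
Local Notation c := (const_mx 1 : 'cV[R]_n).
Hypotheses (n_gt0 : (0 < n)%N) (adj_sym : symmetric adj)
  (k : nat) (adj_regular : forall y, #|[set z | adj y z]| = k)
  (th_dec : forall i j, (i < j)%N -> (j < d)%N -> th j < th i)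
  (eigenvalueE : forall a, eigenvalue A a <-> exists2 i, (i < d)%N & a = th i)
  (E_proj : forall i, (i < d)%N -> is_orth_proj A (th i) (E i)).

(* The valency k is an eigenvalue (for the all-ones vector) and bounds every
   eigenvalue, so it is the largest one, th 0. *)
Lemma adjmx_mul_const1 : (0 < d)%N -> A *m c = th 0%N *: c.
Proof.
move=> d_gt0.
have rowsum y : \sum_z A y z = k%:R by rewrite adjmx_rowsum adj_regular.
have colsum z : \sum_y A y z = k%:R.
  by rewrite -(rowsum z); apply: eq_bigr => y _; rewrite !mxE adj_sym.
have A_c : A *m c = k%:R *: c.
  apply/colP => y; rewrite !mxE -(rowsum y) mulr1.
  by apply: eq_bigr => z _; rewrite !mxE mulr1.
have k_ev : eigenvalue A k%:R.
  apply/eigenvalueP; exists c^T.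
    by rewrite -(adjmx_sym R adj_sym) -trmx_mul A_c linearZ.
  by apply/eqP => /rowP/(_ (Ordinal n_gt0)); rewrite !mxE => /eqP; rewrite oner_eq0.
have th0_ev : eigenvalue A (th 0%N) by apply/eigenvalueE; exists 0%N.
have A_ge0 y z : 0 <= A y z by rewrite mxE ler0n.
have th0_le_k := le_trans (ler_norm _) (eigenvalue_le_colsum A_ge0 colsum th0_ev).
suff <- : k%:R = th 0%N by [].
apply/le_anti; rewrite th0_le_k andbT.
have [[|i] i_lt ->] := (eigenvalueE _).1 k_ev; first by [].
exact/ltW/th_dec.
Qed.

Lemma E_mul_const1 h : (h < d)%N -> E h *m c = if h == 0%N then c else 0.
Proof.
move=> h_lt; have d_gt0 : (0 < d)%N by apply: leq_ltn_trans h_lt.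
case: eqP => [->|/eqP h_neq0].
  have /submxP [W cE] : (c^T <= E 0%N)%MS.
    case/andP: (E_eigenspace E_proj d_gt0) => _; apply: submx_trans; apply/eigenspaceP.
    by rewrite -{1}(adjmx_sym R adj_sym) -trmx_mul adjmx_mul_const1 // linearZ.
  apply: trmx_inj; by rewrite trmx_mul (E_sym E_proj) // cE -mulmxA (E_idem E_proj).
have : (th h - th 0%N) *: (E h *m c) = 0.
  by rewrite scalerBl scalemxAl -(E_mulA E_proj) // -mulmxA adjmx_mul_const1 // scalemxAr subrr.
move/eqP; rewrite scaler_eq0 subr_eq0 lt_eqF /= => [/eqP //|].
by apply: th_dec; rewrite ?lt0n.
Qed.

End RegularGraph.

Lemma Q_polynomial_wrt1_diameter3 (R : nzRingType) (q : nat -> nat -> nat -> R) :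
  q 1%N 0%N 2%N = 0 -> q 1%N 0%N 3%N = 0 -> q 1%N 2%N 0%N = 0 -> q 1%N 3%N 0%N = 0 ->
  (q 1%N 1%N 3%N = 0 /\ q 1%N 3%N 1%N = 0) \/ (q 1%N 1%N 2%N = 0 /\ q 1%N 2%N 1%N = 0) ->
  Q_polynomial_wrt1 3 q.
Proof.
move=> q102 q103 q120 q130 [[q113 q131]|[q112 q121]].
  by exists id; split=> // -[|[|[|[|j]]]] [|[|[|[|h]]]] //= _ _ [].
exists (fun x => if x == 2%N then 3%N else if x == 3%N then 2%N else x); split=> //.
by move=> [|[|[|[|j]]]] [|[|[|[|h]]]] //= _ _ [].
Qed.

Theorem lemma13 (R : realType) (n : nat) (adj : rel 'I_n)
    (theta : nat -> R) (E : nat -> 'M[R]_n) (q : nat -> nat -> nat -> R) :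
  symmetric adj -> irreflexive adj ->
  distance_regular adj -> diameter_is adj 3 ->
  (forall i j, (i < j)%N -> (j < 4)%N -> theta j < theta i) ->
  (forall a, eigenvalue (adjmx R adj) a <-> exists2 i, (i < 4)%N & a = theta i) ->
  (forall i, (i < 4)%N -> is_orth_proj (adjmx R adj) (theta i) (E i)) ->
  (forall i j, (i < 4)%N -> (j < 4)%N ->
     hadamard (E i) (E j) = n%:R^-1 *: \sum_(h < 4) q i j h *: E h) ->
  ((\rank (eigenspace (adjmx R adj) (theta 1%N)) + 2) *
   (\rank (eigenspace (adjmx R adj) (theta 1%N)) + 1) <= 2 * n)%N ->
  (q 1%N 1%N 2%N = 0 \/ q 1%N 1%N 3%N = 0) /\ Q_polynomial_wrt1 3 q.
Proof.
(* The diameter enters only through the number of distinct eigenvalues. *)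
move=> adj_sym adj_irr drg _ th_dec eigE E_proj krein m1_bound.
have n_gt0 : (0 < n)%N by nia.
have A_sym := adjmx_sym R adj_sym.
have th_inj := decreasing_injective th_dec.
have [k adj_regular] := distance_regular_regular adj_irr drg.
have E_c := E_mul_const1 n_gt0 adj_sym adj_regular th_dec eigE E_proj.
have lt14 : (1 < 4)%N by [].
rewrite -(eqmx_rank (E_eigenspace E_proj lt14)) in m1_bound.
have [h [h_lt h_neq0 h_neq1 q11h]] :=
  krein_ii_vanishes A_sym th_inj eigE E_proj E_c krein n_gt0 lt14 m1_bound.
have q1h1 := krein_swap_eq0 A_sym th_inj eigE E_proj krein n_gt0 lt14 lt14 h_lt q11h.
have [q120 q102] := krein0_eq0 A_sym th_inj eigE E_proj E_c krein n_gt0 lt14 (isT : 2 < 4)%N isT.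
have [q130 q103] := krein0_eq0 A_sym th_inj eigE E_proj E_c krein n_gt0 lt14 (isT : 3 < 4)%N isT.
have h23 : h = 2%N \/ h = 3%N.
  by case: h h_lt h_neq0 h_neq1 {q11h q1h1} => [|[|[|[|h]]]] // _ _ _; [left | right].
split; last apply: Q_polynomial_wrt1_diameter3 => //.
  by case: h23 q11h => ->; [left | right].
by case: h23 q11h q1h1 => ->; [right | left].
Qed.
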